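(* Let $\epsilon>0$, $n\ge1$, and let $\phi:\{0,1,\dots,n\}\to(0,1)$. The following are equivalent: (1) There exists $m\in(0,1)$ such that $\phi_0=m$ and $\phi_x=\min\{e^\epsilon\phi_{x-1},\,1-e^{-\epsilon}(1-\phi_{x-1})\}$ for $x=1,\dots,n$. (2) There exists $m\in(0,1)$ such that $\phi_0=m$ and for $x=1,\dots,n$, $\phi_x=e^\epsilon\phi_{x-1}$ if $\phi_{x-1}\le\frac1{1+e^\epsilon}$ and $\phi_x=1-e^{-\epsilon}(1-\phi_{x-1})$ if $\phi_{x-1}>\frac1{1+e^\epsilon}$. (3) There exists $m\in\mathbb{R}$ such that $\phi_x=F_{N_0}(x-m)$ for $x=0,1,\dots,n$, where $N_0\sim\mathrm{Tulap}(0,b=e^{-\epsilon},0)$.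
   Context: Nearest integer function: $[t]$ is the integer nearest to $t$, with $[z+1/2]$ ($z\in\mathbb{Z}$) defined as the nearest even integer. For $b\in(0,1)$, $N_0\sim\mathrm{Tulap}(0,b,0)$ has cdf $F_{N_0}(x)=\frac{b^{-[x]}}{1+b}\big(b+(x-[x]+\tfrac12)(1-b)\big)$ for $x\le 0$ and $F_{N_0}(x)=1-\frac{b^{[x]}}{1+b}\big(b+([x]-x+\tfrac12)(1-b)\big)$ for $x>0$. *)

From Stdlib Require Import Reals ZArith.
Open Scope R_scope.

Definition Rfloor (t : R) : Z := (up t - 1)%Z.

(* Nearest integer [t], with ties z + 1/2 resolved to the nearest even integer. *)
Definition nearest_int (t : R) : Z :=
  let f := Rfloor (t + /2) in
  if Req_EM_T (IZR f) (t + /2) then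
    (if Z.odd f then (f - 1)%Z else f)
  else f.

(* CDF of N_0 ~ Tulap(0, b, 0), for b in (0,1). *)
Definition tulap_cdf (b x : R) : R :=
  let k := nearest_int x in
  if Rle_dec x 0 then
    powerRZ b (- k) / (1 + b) * (b + (x - IZR k + /2) * (1 - b))
  else
    1 - powerRZ b k / (1 + b) * (b + (IZR k - x + /2) * (1 - b)).

From Stdlib Require Import Reals ZArith Lra Lia.
Open Scope R_scope.

(** With b = e^-eps, the recursion in (1) is p |-> min(p/b, 1 - b(1-p)); its two
    branches cross at p = b/(1+b) = 1/(1+e^eps), which gives (1) <-> (2).  On each
    interval [k-1/2, k+1/2] the Tulap cdf F is affine with slope proportional to
    b^|k|; shifting by one piece multiplies F by 1/b left of the central piece
    and 1-F by b from it on, so F(y+1) is obtained from F(y) by the same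
    recursion.  Since the recursion map is strictly increasing and F takes every
    value in (0,1), a sequence obeys the recursion iff it is x |-> F(x-m). *)

Definition tulap_step (b p : R) : R := Rmin (/ b * p) (1 - b * (1 - p)).

Section TulapStep.

Variable b : R.
Hypothesis hb : 0 < b < 1.

Lemma tulap_step_gap p :
  1 - b * (1 - p) - / b * p = / b * (1 - b) * (b - (1 + b) * p).
Proof. field; lra. Qed.

Lemma tulap_step_lower p : (1 + b) * p <= b -> tulap_step b p = / b * p.
Proof.
  intros hp. apply Rmin_left.
  assert (0 <= / b * (1 - b) * (b - (1 + b) * p)).
  { apply Rmult_le_pos; [apply Rmult_le_pos|]; try lra.
    apply Rlt_le, Rinv_0_lt_compat; lra. }
  pose proof (tulap_step_gap p). lra.
Qed.

Lemma tulap_step_upper p : b <= (1 + b) * p -> tulap_step b p = 1 - b * (1 - p).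
Proof.
  intros hp. apply Rmin_right.
  assert (0 <= / b * (1 - b) * ((1 + b) * p - b)).
  { apply Rmult_le_pos; [apply Rmult_le_pos|]; try lra.
    apply Rlt_le, Rinv_0_lt_compat; lra. }
  pose proof (tulap_step_gap p). lra.
Qed.

Lemma tulap_step_increasing u v : u < v -> tulap_step b u < tulap_step b v.
Proof.
  intros huv. unfold tulap_step.
  assert (/ b * u < / b * v)
    by (apply Rmult_lt_compat_l; [apply Rinv_0_lt_compat|]; lra).
  assert (b * (1 - v) < b * (1 - u)) by (apply Rmult_lt_compat_l; lra).
  apply Rmin_glb_lt.
  - apply Rle_lt_trans with (/ b * u); [apply Rmin_l | lra].
  - apply Rle_lt_trans with (1 - b * (1 - u)); [apply Rmin_r | lra].
Qed.

Lemma tulap_step_inj u v : tulap_step b u = tulap_step b v -> u = v.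
Proof.
  intros E. destruct (Rtotal_order u v) as [L|[L|L]]; auto;
    apply tulap_step_increasing in L; lra.
Qed.

Lemma tulap_step_cases p q :
  ((p <= / (1 + / b) -> q = / b * p) /\ (p > / (1 + / b) -> q = 1 - b * (1 - p)))
  <-> q = tulap_step b p.
Proof.
  assert (hthr : p <= / (1 + / b) <-> (1 + b) * p <= b).
  { replace (/ (1 + / b)) with (b * / (1 + b)) by (field; lra).
    assert (0 < / (1 + b)) by (apply Rinv_0_lt_compat; lra).
    assert ((1 + b) * / (1 + b) = 1) by (field; lra).
    split; intros; nra. }
  destruct (Rle_dec p (/ (1 + / b))) as [L|L].
  - rewrite tulap_step_lower by (apply hthr; lra).
    split; [intros [H _]; auto | intros ->; split; intros; lra].
  - rewrite tulap_step_upper by (rewrite hthr in L; lra).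
    split; [intros [_ H]; apply H; lra | intros ->; split; intros; lra].
Qed.

End TulapStep.

Lemma pow_le_one x n : 0 <= x <= 1 -> x ^ n <= 1.
Proof.
  intros hx. induction n as [|n IH]; simpl; [lra|].
  pose proof (pow_le x n (proj1 hx)). nra.
Qed.

Lemma powerRZ_le_one x k : 0 < x <= 1 -> (0 <= k)%Z -> powerRZ x k <= 1.
Proof.
  intros hx hk. rewrite <- (Z2Nat.id k hk), <- pow_powerRZ.
  apply pow_le_one. lra.
Qed.

Lemma powerRZ_le_base x k : 0 < x <= 1 -> (1 <= k)%Z -> powerRZ x k <= x.
Proof.
  intros hx hk. replace k with (1 + (k - 1))%Z by ring.
  rewrite powerRZ_add by lra. simpl (powerRZ x 1).
  pose proof (powerRZ_le_one x (k - 1) hx ltac:(lia)).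
  pose proof (powerRZ_le x (k - 1) ltac:(lra)). nra.
Qed.

Lemma nearest_int_bound x :
  IZR (nearest_int x) - /2 <= x <= IZR (nearest_int x) + /2.
Proof.
  unfold nearest_int, Rfloor.
  destruct (archimed (x + /2)) as [H1 H2].
  destruct Req_EM_T as [E|E]; [destruct (Z.odd _); [rewrite minus_IZR|]|];
    rewrite ?minus_IZR in *; simpl in *; lra.
Qed.

Section Tulap.

Variable b : R.
Hypothesis hb : 0 < b < 1.

Definition tulap_lo (k : Z) (x : R) : R :=
  powerRZ b (- k) / (1 + b) * (b + (x - IZR k + /2) * (1 - b)).

Definition tulap_hi (k : Z) (x : R) : R :=
  1 - powerRZ b k / (1 + b) * (b + (IZR k - x + /2) * (1 - b)).

(* The two formulas agree for k = 0, so the branch can follow the sign of the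
   integer k instead of the sign of x. *)
Definition tulap_piece (k : Z) : R -> R :=
  if (k <? 0)%Z then tulap_lo k else tulap_hi k.

Lemma tulap_cdf_lo_hi x :
  tulap_cdf b x =
  if Rle_dec x 0 then tulap_lo (nearest_int x) x else tulap_hi (nearest_int x) x.
Proof. reflexivity. Qed.

Lemma tulap_lo0_hi0 x : tulap_lo 0 x = tulap_hi 0 x.
Proof. unfold tulap_lo, tulap_hi. simpl. field. lra. Qed.

Lemma tulap_lo_tie k : tulap_lo k (IZR k + /2) = tulap_lo (k + 1) (IZR k + /2).
Proof.
  unfold tulap_lo. rewrite plus_IZR.
  replace (- (k + 1))%Z with (- k + -1)%Z by ring.
  rewrite powerRZ_add by lra. simpl (powerRZ b (-1)). field. lra.
Qed.

Lemma tulap_hi_tie k : tulap_hi k (IZR k + /2) = tulap_hi (k + 1) (IZR k + /2).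
Proof.
  unfold tulap_hi. rewrite plus_IZR, powerRZ_add by lra. simpl (powerRZ b 1).
  field. lra.
Qed.

Lemma tulap_piece_tie k :
  tulap_piece k (IZR k + /2) = tulap_piece (k + 1) (IZR k + /2).
Proof.
  unfold tulap_piece.
  destruct (Z.ltb_spec k 0), (Z.ltb_spec (k + 1) 0); try lia.
  - apply tulap_lo_tie.
  - replace k with (-1)%Z by lia. rewrite tulap_lo_tie. apply tulap_lo0_hi0.
  - apply tulap_hi_tie.
Qed.

Lemma tulap_cdf_nearest x : tulap_cdf b x = tulap_piece (nearest_int x) x.
Proof.
  rewrite tulap_cdf_lo_hi. pose proof (nearest_int_bound x) as hk.
  unfold tulap_piece. set (k := nearest_int x) in *.
  destruct (Rle_dec x 0), (Z.ltb_spec k 0); auto.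
  - assert (k < 1)%Z by (apply lt_IZR; lra).
    replace k with 0%Z by lia. apply tulap_lo0_hi0.
  - assert (IZR k <= -1) by (apply IZR_le; lia). lra.
Qed.

(* The tie-breaking rule of [nearest_int] is irrelevant: adjacent pieces agree
   at half-integers. *)
Lemma tulap_cdf_piece k x :
  IZR k - /2 <= x <= IZR k + /2 -> tulap_cdf b x = tulap_piece k x.
Proof.
  intros hk. rewrite tulap_cdf_nearest. pose proof (nearest_int_bound x) as hn.
  set (k0 := nearest_int x) in *.
  assert (h1 : (k - k0 < 2)%Z) by (apply lt_IZR; rewrite minus_IZR; lra).
  assert (h2 : (-2 < k - k0)%Z) by (apply lt_IZR; rewrite minus_IZR; lra).
  assert (k = k0 \/ k = (k0 + 1)%Z \/ k0 = (k + 1)%Z) as [E|[E|E]] by lia.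
  - subst k. reflexivity.
  - subst k. rewrite plus_IZR in hk. replace x with (IZR k0 + /2) by lra.
    apply tulap_piece_tie.
  - rewrite E, plus_IZR in hn. rewrite E. replace x with (IZR k + /2) by lra.
    symmetry. apply tulap_piece_tie.
Qed.

Lemma tulap_lo_succ k x : tulap_lo (k + 1) (x + 1) = / b * tulap_lo k x.
Proof.
  unfold tulap_lo. rewrite plus_IZR.
  replace (- (k + 1))%Z with (- k + -1)%Z by ring.
  rewrite powerRZ_add by lra. simpl (powerRZ b (-1)). field. lra.
Qed.

Lemma tulap_hi_succ k x : tulap_hi (k + 1) (x + 1) = 1 - b * (1 - tulap_hi k x).
Proof.
  unfold tulap_hi. rewrite plus_IZR, powerRZ_add by lra. simpl (powerRZ b 1).
  field. lra.
Qed.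

Lemma tulap_lo_le k x :
  (k <= -1)%Z -> IZR k - /2 <= x <= IZR k + /2 -> (1 + b) * tulap_lo k x <= b.
Proof.
  intros hk hx. unfold tulap_lo.
  pose proof (powerRZ_le_base b (- k) ltac:(lra) ltac:(lia)).
  pose proof (powerRZ_le b (- k) ltac:(lra)).
  replace ((1 + b) * _)
    with (powerRZ b (- k) * (b + (x - IZR k + /2) * (1 - b))) by (field; lra).
  assert (0 <= b + (x - IZR k + /2) * (1 - b) <= 1) by nra.
  nra.
Qed.

Lemma tulap_hi_ge k x :
  (0 <= k)%Z -> IZR k - /2 <= x <= IZR k + /2 -> b <= (1 + b) * tulap_hi k x.
Proof.
  intros hk hx. unfold tulap_hi.
  pose proof (powerRZ_le_one b k ltac:(lra) hk).
  pose proof (powerRZ_le b k ltac:(lra)).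
  replace ((1 + b) * _)
    with (1 + b - powerRZ b k * (b + (IZR k - x + /2) * (1 - b))) by (field; lra).
  assert (0 <= b + (IZR k - x + /2) * (1 - b) <= 1) by nra.
  nra.
Qed.

Lemma tulap_piece_succ k x :
  IZR k - /2 <= x <= IZR k + /2 ->
  tulap_piece (k + 1) (x + 1) = tulap_step b (tulap_piece k x).
Proof.
  intros hx. unfold tulap_piece.
  destruct (Z.ltb_spec k 0), (Z.ltb_spec (k + 1) 0); try lia.
  - rewrite (tulap_step_lower b hb) by (apply tulap_lo_le; auto; lia).
    apply tulap_lo_succ.
  - replace (k + 1)%Z with 0%Z at 1 by lia. rewrite <- tulap_lo0_hi0.
    replace 0%Z with (k + 1)%Z by lia.
    rewrite (tulap_step_lower b hb) by (apply tulap_lo_le; auto; lia).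
    apply tulap_lo_succ.
  - rewrite (tulap_step_upper b hb) by (apply tulap_hi_ge; auto).
    apply tulap_hi_succ.
Qed.

Lemma tulap_cdf_succ x : tulap_cdf b (x + 1) = tulap_step b (tulap_cdf b x).
Proof.
  pose proof (nearest_int_bound x) as hk.
  rewrite (tulap_cdf_piece (nearest_int x + 1)) by (rewrite plus_IZR; lra).
  rewrite tulap_cdf_nearest. apply tulap_piece_succ; auto.
Qed.

Lemma tulap_cdf_center p : b <= (1 + b) * p <= 1 -> exists y, tulap_cdf b y = p.
Proof.
  intros hp. set (y := ((1 + b) * p - b) / (1 - b) - /2).
  assert (hy : y * (1 - b) = (1 + b) * p - b - /2 * (1 - b))
    by (unfold y; field; lra).
  exists y. rewrite (tulap_cdf_piece 0) by (simpl; split; nra).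
  unfold tulap_piece. simpl. rewrite <- tulap_lo0_hi0.
  unfold tulap_lo. simpl powerRZ.
  replace ((y - IZR 0 + /2) * (1 - b)) with ((1 + b) * p - b) by (simpl; lra).
  field. lra.
Qed.

(* Pull p back into the central band by inverting [tulap_step]; each inversion
   moves p away from 0 or from 1 by the factor 1/b. *)
Lemma tulap_cdf_hits N p :
  b ^ S N <= (1 + b) * p -> b ^ S N <= (1 + b) * (1 - p) ->
  exists y, tulap_cdf b y = p.
Proof.
  revert p. induction N as [|N IH]; intros p hp hq.
  - apply tulap_cdf_center. simpl in *. lra.
  - assert (hbN : 0 < b ^ S N) by (apply pow_lt; lra).
    assert (hi : b * / b = 1) by (field; lra).
    assert (0 < / b) by (apply Rinv_0_lt_compat; lra).
    assert (b ^ S N <= b) by (simpl; pose proof (pow_le_one b N ltac:(lra)); nra).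
    change (b ^ S (S N)) with (b * b ^ S N) in *.
    destruct (Rlt_le_dec ((1 + b) * p) b) as [Lp|Lp].
    + destruct (IH (/ b * p)) as [y Hy]; [nra|nra|].
      exists (y - 1). apply (tulap_step_inj b hb).
      rewrite <- tulap_cdf_succ, (tulap_step_lower b hb) by lra.
      replace (y - 1 + 1) with y by ring. exact Hy.
    + destruct (Rlt_le_dec ((1 + b) * (1 - p)) b) as [Lq|Lq].
      * destruct (IH (1 - / b * (1 - p))) as [y Hy]; [nra|nra|].
        exists (y + 1). rewrite tulap_cdf_succ, Hy, (tulap_step_upper b hb) by nra.
        replace (b * (1 - (1 - / b * (1 - p)))) with (b * / b * (1 - p)) by ring.
        nra.
      * apply tulap_cdf_center. lra.
Qed.

Lemma tulap_cdf_surjective p : 0 < p < 1 -> exists y, tulap_cdf b y = p.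
Proof.
  intros hp.
  destruct (pow_lt_1_zero b ltac:(rewrite Rabs_right; lra) (Rmin p (1 - p)))
    as [N HN]; [apply Rmin_glb_lt; lra|].
  specialize (HN N (Nat.le_refl N)).
  rewrite Rabs_right in HN by (apply Rle_ge, pow_le; lra).
  pose proof (Rmin_l p (1 - p)). pose proof (Rmin_r p (1 - p)).
  pose proof (pow_le b N ltac:(lra)).
  apply (tulap_cdf_hits N); simpl; nra.
Qed.

Lemma tulap_orbit_iff (n : nat) (phi : nat -> R) :
  0 < phi 0%nat < 1 ->
  (forall x : nat, (1 <= x <= n)%nat -> phi x = tulap_step b (phi (x - 1)%nat)) <->
  exists m : R, forall x : nat, (x <= n)%nat -> phi x = tulap_cdf b (INR x - m).
Proof.
  intros h0. split.
  - intros Hrec. destruct (tulap_cdf_surjective (phi 0%nat) h0) as [y Hy].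
    exists (- y). induction x as [|x IH]; intros hx.
    + rewrite <- Hy. f_equal. simpl. ring.
    + rewrite Hrec, Nat.sub_succ, Nat.sub_0_r, IH by lia.
      rewrite <- tulap_cdf_succ, S_INR. f_equal. ring.
  - intros [m Hm] x hx. rewrite !Hm by lia.
    replace x with (S (x - 1)) at 1 by lia.
    rewrite S_INR, <- tulap_cdf_succ. f_equal. ring.
Qed.

End Tulap.

Theorem lemma3 (eps : R) (n : nat) (phi : nat -> R)
  (heps : 0 < eps) (hn : (1 <= n)%nat)
  (hphi : forall x : nat, (x <= n)%nat -> 0 < phi x < 1) :
  let P1 := exists m : R, 0 < m < 1 /\ phi 0%nat = m /\
      forall x : nat, (1 <= x <= n)%nat ->
        phi x = Rmin (exp eps * phi (x - 1)%nat)
                     (1 - exp (- eps) * (1 - phi (x - 1)%nat)) in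
  let P2 := exists m : R, 0 < m < 1 /\ phi 0%nat = m /\
      forall x : nat, (1 <= x <= n)%nat ->
        (phi (x - 1)%nat <= / (1 + exp eps) -> phi x = exp eps * phi (x - 1)%nat) /\
        (phi (x - 1)%nat > / (1 + exp eps) ->
           phi x = 1 - exp (- eps) * (1 - phi (x - 1)%nat)) in
  let P3 := exists m : R,
      forall x : nat, (x <= n)%nat -> phi x = tulap_cdf (exp (- eps)) (INR x - m) in
  (P1 <-> P2) /\ (P2 <-> P3) /\ (P1 <-> P3).
Proof.
  cbv zeta.
  assert (hb : 0 < exp (- eps) < 1).
  { split; [apply exp_pos|]. rewrite <- exp_0. apply exp_increasing. lra. }
  replace (exp eps) with (/ exp (- eps)) by (rewrite exp_Ropp; apply Rinv_inv).
  set (b := exp (- eps)) in *.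
  assert (h0 : 0 < phi 0%nat < 1) by (apply hphi; lia).
  set (Q := forall x : nat, (1 <= x <= n)%nat -> phi x = tulap_step b (phi (x - 1)%nat)).
  assert (seed : forall S : Prop, (exists m, 0 < m < 1 /\ phi 0%nat = m /\ S) <-> S).
  { intros S. split; [intros (_ & _ & _ & HS); exact HS | exists (phi 0%nat); auto]. }
  assert (E1 : (forall x : nat, (1 <= x <= n)%nat ->
      phi x = Rmin (/ b * phi (x - 1)%nat) (1 - b * (1 - phi (x - 1)%nat))) <-> Q)
    by reflexivity.
  assert (E2 : (forall x : nat, (1 <= x <= n)%nat ->
      (phi (x - 1)%nat <= / (1 + / b) -> phi x = / b * phi (x - 1)%nat) /\
      (phi (x - 1)%nat > / (1 + / b) -> phi x = 1 - b * (1 - phi (x - 1)%nat))) <-> Q).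
  { split; intros H x hx; apply (tulap_step_cases b hb); auto. }
  rewrite !seed, E1, E2, <- (tulap_orbit_iff b hb n phi h0). tauto.
Qed.
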